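(* Let $K\ge1$, $A=\{1,\dots,K\}$, let $d\ge1$ be an integer, $0<\delta\le 1/d$ and $0<\eta\le\frac{1}{Ke(d+1)}$. Consider the update: $w_1(i)=1$, $W_t=\sum_j w_t(j)$, $\widetilde p_t(i)=\max\{w_t(i)/W_t,\delta/K\}$, $\widetilde P_t=\sum_j\widetilde p_t(j)$, $p_t(i)=\widetilde p_t(i)/\widetilde P_t$, $w_{t+1}(i)=p_t(i)\exp(-\eta\widehat\ell_t(i))$, where $$\widehat\ell_t(i)=\begin{cases}\dfrac{\ell_{t-d}(i)}{q_{t-d}(i)}B_{t-d}(i)&t>d,\\0&\text{otherwise,}\end{cases}$$ with $\ell_s(i)\in[0,1]$, $B_s(i)\in\{0,1\}$ and $q_s(i)\ge p_s(i)$ for all $s,i$. Then for all $t\ge1$ and $i\in A$, $$p_{t+1}(i)\le\Bigl(1+\frac1d\Bigr)p_t(i).$$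
   Context: The statement holds deterministically for every realization of the $\ell_s,B_s,q_s$ satisfying the stated conditions. *)

(* real numbers with exp. Arms A = {1..K} are encoded as nat i with i < K. *)
From Stdlib Require Import Reals Lra List.
Import ListNotations.
Open Scope R_scope.

Definition sumA (K : nat) (f : nat -> R) : R :=
  fold_right Rplus 0 (map f (seq 0 K)).

Definition ptilde (K : nat) (delta : R) (wf : nat -> R) (i : nat) : R :=
  Rmax (wf i / sumA K wf) (delta / INR K).

Definition pw (K : nat) (delta : R) (wf : nat -> R) (i : nat) : R :=
  ptilde K delta wf i / sumA K (ptilde K delta wf).

Definition lhat (d : nat) (ell : nat -> nat -> R) (B : nat -> nat -> bool)
    (q : nat -> nat -> R) (t i : nat) : R :=
  if (d <? t)%nat then
    ell (t - d)%nat i / q (t - d)%nat i * (if B (t - d)%nat i then 1 else 0)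
  else 0.

(* weights w_t, t >= 1 (w_0 is a junk value) *)
Fixpoint weight (K d : nat) (delta eta : R) (ell : nat -> nat -> R)
    (B : nat -> nat -> bool) (q : nat -> nat -> R) (t : nat) : nat -> R :=
  match t with
  | O => fun _ => 1
  | S O => fun _ => 1
  | S t' => fun i =>
      pw K delta (weight K d delta eta ell B q t') i
        * exp (- eta * lhat d ell B q t' i)
  end.

Definition prob (K d : nat) (delta eta : R) (ell : nat -> nat -> R)
    (B : nat -> nat -> bool) (q : nat -> nat -> R) (t i : nat) : R :=
  pw K delta (weight K d delta eta ell B q t) i.

(** Write [c = 1 + 1/d].  By strong induction on [t], the claim for all
    earlier rounds gives [p_t(j) <= c^d p_(t-d)(j) <= e p_(t-d)(j)], and since
    [q_(t-d)(j) >= p_(t-d)(j)] every estimated loss satisfies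
    [p_t(j) * lhat_t(j) <= e].  With [exp(-x) >= 1 - x] this bounds the new
    total weight from below: [W_(t+1) >= 1 - eta K e >= d/(d+1)].  Finally
    [p_(t+1)(i) <= ptilde_(t+1)(i)], whose first branch is at most
    [p_t(i)/W_(t+1) <= c p_t(i)], and whose floor [delta/K] is at most
    [(1 + delta) p_t(i) <= c p_t(i)] because mixing in the floor inflates the
    normaliser by at most [delta]. *)

From Stdlib Require Import Reals Lra List Lia Wf_nat.
Open Scope R_scope.

Lemma sum_map_le (l : list nat) (f g : nat -> R) :
  (forall j, In j l -> f j <= g j) ->
  fold_right Rplus 0 (map f l) <= fold_right Rplus 0 (map g l).
Proof.
  induction l as [|a l IH]; simpl; intros Hfg; [lra|].
  apply Rplus_le_compat; auto.
Qed.

Lemma sum_map_pos (l : list nat) (f : nat -> R) :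
  l <> nil -> (forall j, In j l -> 0 < f j) -> 0 < fold_right Rplus 0 (map f l).
Proof.
  induction l as [|a l IH]; simpl; intros Hl Hf; [congruence|].
  assert (0 < f a) by auto.
  destruct l as [|b l]; simpl; [lra|].
  assert (0 < f b + fold_right Rplus 0 (map f l)).
  { apply IH; [congruence|]. intros j Hj; apply Hf; simpl in *; tauto. }
  lra.
Qed.

Lemma sumA_le (K : nat) (f g : nat -> R) :
  (forall j, (j < K)%nat -> f j <= g j) -> sumA K f <= sumA K g.
Proof. intros Hfg; apply sum_map_le; intros j Hj; apply in_seq in Hj; apply Hfg; lia. Qed.

Lemma sumA_pos (K : nat) (f : nat -> R) :
  (1 <= K)%nat -> (forall j, (j < K)%nat -> 0 < f j) -> 0 < sumA K f.
Proof.
  intros HK Hf; apply sum_map_pos.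
  - destruct K; [lia|discriminate].
  - intros j Hj; apply in_seq in Hj; apply Hf; lia.
Qed.

Lemma sumA_plus (K : nat) (f g : nat -> R) :
  sumA K (fun j => f j + g j) = sumA K f + sumA K g.
Proof. unfold sumA; induction (seq 0 K); simpl; lra. Qed.

Lemma sumA_mulr (K : nat) (f : nat -> R) (c : R) :
  sumA K (fun j => f j * c) = sumA K f * c.
Proof. unfold sumA; induction (seq 0 K); simpl; [ring|rewrite IHl; ring]. Qed.

Lemma sumA_const (K : nat) (c : R) : sumA K (fun _ => c) = INR K * c.
Proof.
  unfold sumA; rewrite <- (length_seq K 0) at 2.
  induction (seq 0 K) as [|a l IH]; simpl; [ring|].
  rewrite IH; destruct (length l); simpl; ring.
Qed.

Lemma exp_pow (x : R) (n : nat) : exp x ^ n = exp (INR n * x).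
Proof. rewrite <- Rpower_pow by apply exp_pos. unfold Rpower; now rewrite ln_exp. Qed.

Lemma pow_le_exp (x : R) (n : nat) : 0 <= 1 + x -> (1 + x) ^ n <= exp (INR n * x).
Proof.
  intros Hx; rewrite <- exp_pow.
  apply pow_incr; split; [exact Hx | apply exp_ineq1_le].
Qed.

Lemma geometric_growth (f : nat -> R) (c : R) (s m : nat) :
  0 <= c -> (forall k, (s <= k < s + m)%nat -> f (S k) <= c * f k) ->
  f (s + m)%nat <= c ^ m * f s.
Proof.
  intros Hc Hf; induction m as [|m IH]; simpl.
  - rewrite Nat.add_0_r; lra.
  - rewrite Nat.add_succ_r, Rmult_assoc.
    eapply Rle_trans; [apply Hf; lia|].
    apply Rmult_le_compat_l; [exact Hc|]. apply IH; intros; apply Hf; lia.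
Qed.

Lemma sumA_mul_exp_ge (K : nat) (p L : nat -> R) (eta M : R) :
  0 <= eta ->
  (forall j, (j < K)%nat -> 0 <= p j) ->
  (forall j, (j < K)%nat -> p j * L j <= M) ->
  sumA K p - eta * (INR K * M) <= sumA K (fun j => p j * exp (- eta * L j)).
Proof.
  intros Heta Hp HpL.
  replace (sumA K p - eta * (INR K * M)) with (sumA K (fun j => p j + - (eta * M)))
    by (rewrite sumA_plus, sumA_const; ring).
  apply sumA_le; intros j Hj.
  assert (p j * (1 + - eta * L j) <= p j * exp (- eta * L j))
    by (apply Rmult_le_compat_l; [auto | apply exp_ineq1_le]).
  specialize (HpL j Hj). nra.
Qed.

Section Normalization.

Variables (K : nat) (delta : R).
Hypothesis HK : (1 <= K)%nat.
Hypothesis Hdelta : 0 < delta.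

Lemma floor_pos : 0 < delta / INR K.
Proof. apply Rdiv_lt_0_compat; [exact Hdelta | apply lt_0_INR; lia]. Qed.

Lemma ptilde_ge_floor (wf : nat -> R) (i : nat) : delta / INR K <= ptilde K delta wf i.
Proof. apply Rmax_r. Qed.

Lemma ptilde_pos (wf : nat -> R) (i : nat) : 0 < ptilde K delta wf i.
Proof. pose proof floor_pos; pose proof (ptilde_ge_floor wf i); lra. Qed.

Lemma sumA_ptilde_pos (wf : nat -> R) : 0 < sumA K (ptilde K delta wf).
Proof. apply sumA_pos; auto using ptilde_pos. Qed.

Lemma pw_pos (wf : nat -> R) (i : nat) : 0 < pw K delta wf i.
Proof. apply Rdiv_lt_0_compat; auto using ptilde_pos, sumA_ptilde_pos. Qed.

Lemma sumA_pw (wf : nat -> R) : sumA K (pw K delta wf) = 1.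
Proof.
  pose proof (sumA_ptilde_pos wf).
  unfold pw, Rdiv; rewrite sumA_mulr; field; lra.
Qed.

Variable wf : nat -> R.
Hypothesis Hwf : forall j, (j < K)%nat -> 0 <= wf j.
Hypothesis HW : 0 < sumA K wf.

Lemma sumA_ptilde_ge1 : 1 <= sumA K (ptilde K delta wf).
Proof.
  replace 1 with (sumA K (fun j => wf j * / sumA K wf))
    by (rewrite sumA_mulr; field; lra).
  apply sumA_le; intros j _; apply Rmax_l.
Qed.

Lemma sumA_ptilde_le : sumA K (ptilde K delta wf) <= 1 + delta.
Proof.
  assert (HKpos : 0 < INR K) by (apply lt_0_INR; lia).
  replace (1 + delta) with (sumA K (fun j => wf j * / sumA K wf + delta / INR K))
    by (rewrite sumA_plus, sumA_mulr, sumA_const; field; lra).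
  apply sumA_le; intros j Hj; unfold ptilde.
  pose proof floor_pos.
  assert (0 <= wf j * / sumA K wf)
    by (apply Rmult_le_pos; [auto | left; apply Rinv_0_lt_compat, HW]).
  apply Rmax_lub; unfold Rdiv; lra.
Qed.

Lemma pw_le_ptilde (i : nat) : pw K delta wf i <= ptilde K delta wf i.
Proof.
  pose proof sumA_ptilde_ge1; pose proof (ptilde_pos wf i).
  unfold pw; apply Rmult_le_reg_r with (sumA K (ptilde K delta wf)); [lra|].
  field_simplify; nra.
Qed.

Lemma floor_le_pw (i : nat) : delta / INR K <= (1 + delta) * pw K delta wf i.
Proof.
  pose proof sumA_ptilde_le; pose proof (sumA_ptilde_pos wf).
  pose proof (ptilde_ge_floor wf i); pose proof (ptilde_pos wf i).
  unfold pw.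
  apply Rle_trans with (ptilde K delta wf i); [assumption|].
  apply Rmult_le_reg_r with (sumA K (ptilde K delta wf)); [lra|].
  field_simplify; nra.
Qed.

End Normalization.

Section Dynamics.

Variables (K d : nat) (delta eta : R).
Variables (ell : nat -> nat -> R) (B : nat -> nat -> bool) (q : nat -> nat -> R).
Hypothesis HK : (1 <= K)%nat.
Hypothesis Hd : (1 <= d)%nat.
Hypothesis Hdelta : 0 < delta.
Hypothesis Hdelta_d : delta <= 1 / INR d.
Hypothesis Heta : 0 < eta.
Hypothesis Heta_K : eta <= 1 / (INR K * exp 1 * (INR d + 1)).
Hypothesis Hell : forall s i, (i < K)%nat -> 0 <= ell s i <= 1.
Hypothesis Hq : forall s i, (1 <= s)%nat -> (i < K)%nat ->
  prob K d delta eta ell B q s i <= q s i.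

Local Notation w := (weight K d delta eta ell B q).
Local Notation p := (prob K d delta eta ell B q).
Local Notation L := (lhat d ell B q).

Lemma weight_succ (t j : nat) : (1 <= t)%nat -> w (S t) j = p t j * exp (- eta * L t j).
Proof. intros Ht; destruct t; [lia|reflexivity]. Qed.

Lemma weight_pos (t j : nat) : 0 < w t j.
Proof.
  destruct t as [|[|t]]; simpl; try lra.
  apply Rmult_lt_0_compat; [apply pw_pos; auto | apply exp_pos].
Qed.

Lemma prob_pos (t j : nat) : 0 < p t j.
Proof. apply pw_pos; auto. Qed.

Lemma sumA_prob (t : nat) : sumA K (p t) = 1.
Proof. apply sumA_pw; auto. Qed.

Lemma lhat_nonneg (t j : nat) : (j < K)%nat -> 0 <= L t j.
Proof.
  intros Hj; unfold lhat; destruct (Nat.ltb_spec d t); [|lra].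
  assert (0 < q (t - d)%nat j)
    by (eapply Rlt_le_trans; [apply prob_pos | apply Hq; auto; lia]).
  pose proof (Hell (t - d)%nat j Hj).
  destruct (B (t - d)%nat j); [|lra].
  rewrite Rmult_1_r; unfold Rdiv; apply Rmult_le_pos; [lra | left; apply Rinv_0_lt_compat; lra].
Qed.

Lemma lhat_le_inv_prob (t j : nat) :
  (d < t)%nat -> (j < K)%nat -> L t j <= / p (t - d)%nat j.
Proof.
  intros Hdt Hj; unfold lhat; rewrite (proj2 (Nat.ltb_lt d t) Hdt).
  pose proof (prob_pos (t - d) j).
  assert (p (t - d)%nat j <= q (t - d)%nat j) by (apply Hq; auto; lia).
  pose proof (Hell (t - d)%nat j Hj).
  apply Rle_trans with (/ q (t - d)%nat j).
  - assert (0 < / q (t - d)%nat j) by (apply Rinv_0_lt_compat; lra).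
    destruct (B (t - d)%nat j); unfold Rdiv; nra.
  - apply Rinv_le_contravar; lra.
Qed.

Lemma inv_weight_sum_le (t : nat) :
  (1 <= t)%nat ->
  (forall j, (j < K)%nat -> p t j * L t j <= exp 1) ->
  / sumA K (w (S t)) <= 1 + 1 / INR d.
Proof.
  intros Ht HpL.
  assert (HdR : 1 <= INR d) by (apply (le_INR 1); lia).
  assert (HKR : 1 <= INR K) by (apply (le_INR 1); lia).
  assert (Hcost : eta * (INR K * exp 1) <= 1 / (INR d + 1)).
  { set (D := INR K * exp 1 * (INR d + 1)) in Heta_K.
    assert (HD : 0 < D) by (pose proof (exp_pos 1); unfold D; repeat apply Rmult_lt_0_compat; lra).
    assert (HetaD : eta * D <= 1).
    { apply Rmult_le_compat_r with (r := D) in Heta_K; [|lra].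
      replace (1 / D * D) with 1 in Heta_K by (field; lra). exact Heta_K. }
    replace (eta * (INR K * exp 1)) with (eta * D * / (INR d + 1)) by (unfold D; field; lra).
    unfold Rdiv; apply Rmult_le_compat_r; [left; apply Rinv_0_lt_compat|]; lra. }
  assert (HW : INR d / (INR d + 1) <= sumA K (w (S t))).
  { assert (Hsum : 1 - eta * (INR K * exp 1)
                   <= sumA K (fun j => p t j * exp (- eta * L t j))).
    { rewrite <- (sumA_prob t) at 1.
      apply sumA_mul_exp_ge; auto; [lra|]. intros; left; apply prob_pos. }
    replace (sumA K (w (S t))) with (sumA K (fun j => p t j * exp (- eta * L t j)))
      by (unfold sumA; f_equal; apply map_ext; intros; now rewrite weight_succ).
    apply Rle_trans with (1 - 1 / (INR d + 1)); [right; field; lra | lra]. }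
  apply Rle_trans with (/ (INR d / (INR d + 1))).
  - apply Rinv_le_contravar; [apply Rdiv_lt_0_compat|]; lra.
  - right; field; lra.
Qed.

Lemma prob_succ_le_of_weight_sum (t i : nat) :
  (1 <= t)%nat -> (i < K)%nat ->
  / sumA K (w (S t)) <= 1 + 1 / INR d ->
  p (S t) i <= (1 + 1 / INR d) * p t i.
Proof.
  intros Ht Hi HW.
  assert (Hw0 : forall j, (j < K)%nat -> 0 <= w (S t) j) by (intros; left; apply weight_pos).
  assert (Hsum : 0 < sumA K (w (S t))) by (apply sumA_pos; auto using weight_pos).
  pose proof (prob_pos t i).
  eapply Rle_trans; [apply pw_le_ptilde; auto|].
  apply Rmax_lub.
  - assert (Hdecay : exp (- eta * L t i) <= 1).
    { assert (Hx : - eta * L t i <= 0) by (pose proof (lhat_nonneg t i Hi); nra).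
      rewrite <- exp_0; destruct Hx as [Hx|Hx]; [left; apply exp_increasing, Hx | rewrite Hx; lra]. }
    rewrite weight_succ by exact Ht; unfold Rdiv at 1.
    pose proof (exp_pos (- eta * L t i)).
    assert (0 < / sumA K (w (S t))) by (apply Rinv_0_lt_compat; lra).
    apply Rle_trans with (p t i * / sumA K (w (S t))).
    + apply Rmult_le_compat_r; nra.
    + rewrite Rmult_comm; apply Rmult_le_compat_r; lra.
  - assert (HdR : 1 <= INR d) by (apply (le_INR 1); lia).
    assert (Hfloor : delta / INR K <= (1 + delta) * p t i).
    { apply floor_le_pw; auto.
      - intros; left; apply weight_pos.
      - apply sumA_pos; auto using weight_pos. }
    nra.
Qed.

Lemma prob_succ_le_of_history (t i : nat) :
  (1 <= t)%nat -> (i < K)%nat ->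
  (forall s j, (1 <= s)%nat -> (s < t)%nat -> (j < K)%nat ->
     p (S s) j <= (1 + 1 / INR d) * p s j) ->
  p (S t) i <= (1 + 1 / INR d) * p t i.
Proof.
  intros Ht Hi IH.
  assert (HdR : 1 <= INR d) by (apply (le_INR 1); lia).
  assert (Hc : 0 <= 1 + 1 / INR d) by (unfold Rdiv; pose proof (Rinv_0_lt_compat (INR d)); lra).
  assert (HpL : forall j, (j < K)%nat -> p t j * L t j <= exp 1).
  { intros j Hj; destruct (Nat.ltb_spec d t) as [Hdt|Hdt].
    - assert (Hgrowth : p t j <= exp 1 * p (t - d)%nat j).
      { replace t with (t - d + d)%nat at 1 by lia.
        eapply Rle_trans.
        { apply (geometric_growth (fun s => p s j)); [exact Hc|].
          intros k Hk; apply IH; auto; lia. }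
        apply Rmult_le_compat_r; [left; apply prob_pos|].
        eapply Rle_trans; [apply pow_le_exp; lra|]. right; f_equal; field; lra. }
      pose proof (prob_pos t j); pose proof (prob_pos (t - d) j).
      eapply Rle_trans; [apply Rmult_le_compat_l; [lra | apply lhat_le_inv_prob; auto]|].
      apply Rmult_le_reg_r with (p (t - d)%nat j); [lra|].
      field_simplify; lra.
    - unfold lhat; rewrite (proj2 (Nat.ltb_ge d t) Hdt), Rmult_0_r.
      left; apply exp_pos. }
  apply prob_succ_le_of_weight_sum; auto using inv_weight_sum_le.
Qed.

End Dynamics.

Theorem mainTheorem6 (K d : nat) (delta eta : R)
    (ell : nat -> nat -> R) (B : nat -> nat -> bool) (q : nat -> nat -> R) :
  (1 <= K)%nat -> (1 <= d)%nat ->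
  0 < delta -> delta <= 1 / INR d ->
  0 < eta -> eta <= 1 / (INR K * exp 1 * (INR d + 1)) ->
  (forall s i, (i < K)%nat -> 0 <= ell s i <= 1) ->
  (forall s i, (1 <= s)%nat -> (i < K)%nat ->
      prob K d delta eta ell B q s i <= q s i) ->
  forall t i, (1 <= t)%nat -> (i < K)%nat ->
    prob K d delta eta ell B q (t + 1) i
      <= (1 + 1 / INR d) * prob K d delta eta ell B q t i.
Proof.
  intros HK Hd Hdelta Hdelta_d Heta Heta_K Hell Hq t.
  induction t as [t IH] using (well_founded_induction lt_wf).
  intros i Ht Hi; rewrite Nat.add_1_r.
  apply prob_succ_le_of_history; auto.
  intros s j Hs Hst Hj; rewrite <- Nat.add_1_r; auto.
Qed.
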